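(* Let $\ell\ge2$ and let $G$ be an $N$-AW graph. Then every vertex of degree $d\ge 2$ in $\overline{G}$ has at least $d-1$ neighbors (in $\overline{G}$) of degree at least $2$ in $\overline{G}$.
   Context: All graphs are finite and simple; $\overline{G}$ is the complement. Labels lie in $\mathbb{Z}_\ell$. In the neighborhood Lights Out game, toggling a vertex $w$ adds $1$ (mod $\ell$) to the label of each vertex of the closed neighborhood $N[w]$; the game is won when all labels are $0$; a graph is $N$-AW if every initial labeling can be won. *)

From mathcomp Require Import all_boot all_order all_algebra.
Set Implicit Arguments. Unset Strict Implicit. Unset Printing Implicit Defensive.
Import GRing.Theory.
Local Open Scope ring_scope.

Definition simple_graph (T : finType) (e : rel T) : Prop :=
  symmetric e /\ irreflexive e.

Definition closed_nbhd (T : finType) (e : rel T) (w : T) : {set T} :=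
  [set v | (v == w) || e w v].

Definition toggle_seq (T : finType) (e : rel T) (l : nat)
  (lab : T -> 'Z_l) (s : seq T) : T -> 'Z_l :=
  foldl (fun f w => fun v => f v + (if v \in closed_nbhd e w then 1 else 0)) lab s.

(* Neighborhood Lights Out over Z_l: G is N-AW (always winnable). *)
Definition N_AW (T : finType) (e : rel T) (l : nat) : Prop :=
  forall lab : T -> 'Z_l, exists s : seq T, forall v, toggle_seq e lab s v = 0.

Definition compl_rel (T : finType) (e : rel T) : rel T :=
  fun x y => (x != y) && ~~ e x y.

Definition deg (T : finType) (e : rel T) (x : T) : nat := #|[set y | e x y]|.

From mathcomp Require Import all_boot all_order all_algebra.
Import GRing.Theory.

Set Implicit Arguments.
Unset Strict Implicit.
Unset Printing Implicit Defensive.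

(* Two distinct vertices with the same closed neighborhood in G ("closed
   twins") receive the same increments from every toggle, so the difference of
   their labels is invariant and a labeling with different values on them can
   never be won.  A neighbor u of v in the complement with complement degree
   below 2 is adjacent there to v only, i.e. N[u] = V \ {v} in G; two such
   neighbors would be closed twins, so at most one neighbor of v is of this
   kind. *)

Lemma in_closed_nbhd (T : finType) (e : rel T) (x u : T) :
  (u \in closed_nbhd e x) = ~~ compl_rel e x u.
Proof. by rewrite inE /compl_rel negb_and !negbK eq_sym. Qed.

Lemma compl_rel_sym (T : finType) (e : rel T) :
  symmetric e -> symmetric (compl_rel e).
Proof. by move=> esym x y; rewrite /compl_rel eq_sym esym. Qed.

Lemma deg_le1_adj (T : finType) (r : rel T) (u v : T) :
  r u v -> (deg r u <= 1)%N -> forall y, r u y = (y == v).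
Proof.
move=> ruv /card_le1_eqP deg_le1 y.
apply/idP/eqP => [ruy | ->] //.
by apply: deg_le1; rewrite inE.
Qed.

Section ClosedTwins.

Variables (l : nat) (T : finType) (e : rel T).

Definition closed_twins (u w : T) : Prop :=
  forall x, (u \in closed_nbhd e x) = (w \in closed_nbhd e x).

Lemma toggle_seq_twins_sub (u w : T) : closed_twins u w ->
  forall (s : seq T) (lab : T -> 'Z_l),
    (toggle_seq e lab s u - toggle_seq e lab s w = lab u - lab w)%R.
Proof.
move=> twins; elim=> [|x s IHs] lab //=.
rewrite /toggle_seq /= -/(toggle_seq _ _ _) IHs twins.
by rewrite opprD addrACA subrr addr0.
Qed.

Lemma N_AW_closed_twins_eq (u w : T) :
  N_AW e l -> closed_twins u w -> u = w.
Proof.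
move=> winnable twins; apply/eqP/negPn/negP => neq_uw.
pose lab (y : T) : 'Z_l := if y == u then 1%R else 0%R.
have [s won] := winnable lab.
have := toggle_seq_twins_sub twins s lab.
rewrite !won /lab eqxx eq_sym (negbTE neq_uw) subrr subr0.
by move/esym/eqP; rewrite oner_eq0.
Qed.

End ClosedTwins.

Lemma closed_nbhd_compl_leaf (T : finType) (e : rel T) (u v : T) :
  symmetric e -> compl_rel e v u -> (deg (compl_rel e) u <= 1)%N ->
  forall x, (u \in closed_nbhd e x) = (x != v).
Proof.
move=> esym cvu deg_u x.
have csym := compl_rel_sym esym.
have cuv : compl_rel e u v by rewrite csym.
by rewrite in_closed_nbhd csym (deg_le1_adj cuv deg_u).
Qed.

Lemma compl_leaves_card_le1 (l : nat) (T : finType) (e : rel T) (v : T) :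
  symmetric e -> N_AW e l ->
  (#|[set u | compl_rel e v u & (deg (compl_rel e) u <= 1)%N]| <= 1)%N.
Proof.
move=> esym winnable; apply/card_le1_eqP => u w.
rewrite !inE => /andP[cvu deg_u] /andP[cvw deg_w].
apply: (N_AW_closed_twins_eq winnable) => x.
by rewrite (closed_nbhd_compl_leaf esym cvu deg_u)
           (closed_nbhd_compl_leaf esym cvw deg_w).
Qed.

Theorem lemma4p13 (l : nat) (T : finType) (e : rel T) :
  (2 <= l)%N -> simple_graph e -> N_AW e l ->
  forall v : T, (2 <= deg (compl_rel e) v)%N ->
    (deg (compl_rel e) v - 1 <=
       #|[set u | compl_rel e v u & (2 <= deg (compl_rel e) u)%N]|)%N.
Proof.
move=> _ [esym _] winnable v _.
set big := [set u | _ & _].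
have leaves := compl_leaves_card_le1 v esym winnable.
have split_nbhd : deg (compl_rel e) v =
    (#|big| + #|[set u | compl_rel e v u & (deg (compl_rel e) u <= 1)%N]|)%N.
  rewrite /deg -(cardsID big [set u | compl_rel e v u]).
  congr (_ + _)%N; apply: eq_card => u; rewrite !inE.
    by case: (compl_rel e v u).
  by case: (compl_rel e v u); rewrite //= andbT -leqNgt.
by rewrite split_nbhd leq_subLR addnC leq_add2r.
Qed.
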